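(* With $\mathcal{F}$ the weaved flag of type $(m_1,\dots,m_2-m_1,m_2,\dots,m_k,\dots,n-m_k)$, let $\beta\in\mathbb{F}_{q^n}^\ast\setminus\mathbb{F}_{q^{m_1}}^\ast$ satisfy $\langle\beta\rangle\cap\mathbb{F}_{q^{m_1}}^\ast=\langle\beta\rangle\cap\mathbb{F}_{q^{m_k}}^\ast$. If $L_{k+1}=n/m_k\le3$, then $\mathrm{Orb}_\beta(\mathcal{F})$ is an optimum distance flag code.
   Context: $q$ prime power; $m_1<\dots<m_k<m_{k+1}=n$ with $m_i\mid m_{i+1}$; $L_i=m_i/m_{i-1}$ for $2\le i\le k+1$; $\alpha$ primitive in $\mathbb{F}_{q^n}$; $\alpha_i=\alpha^{(q^n-1)/(q^{m_i}-1)}$; $\mathcal{F}^i_j=\bigoplus_{t=0}^{j-1}\mathbb{F}_{q^{m_i}}\alpha_{i+1}^t$ ($\mathbb{F}_q$-subspaces of $\mathbb{F}_{q^n}$) for $1\le i\le k$, $1\le j\le L_{i+1}-1$, and $\mathcal{F}=(\mathcal{F}^1_1,\dots,\mathcal{F}^1_{L_2-1},\dots,\mathcal{F}^k_1,\dots,\mathcal{F}^k_{L_{k+1}-1})$. $d_S(\mathcal{U},\mathcal{V})=\dim(\mathcal{U}+\mathcal{V})-\dim(\mathcal{U}\cap\mathcal{V})$; $d_f$ is the sum of $d_S$ over positions; $\mathrm{Orb}_\beta(\mathcal{F})=\{\mathcal{F}\beta^j:j\ge0\}$ with $\mathcal{F}\beta^j$ obtained by multiplying each subspace by $\beta^j$.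 A flag code of type $(t_1,\dots,t_r)$ on $\mathbb{F}_{q^n}$ is an optimum distance flag code if its minimum distance (minimum $d_f$ between distinct codewords) equals $2(\sum_{t_i\le\lfloor n/2\rfloor}t_i+\sum_{t_i>\lfloor n/2\rfloor}(n-t_i))$. *)

From HB Require Import structures.
From mathcomp Require Import all_boot all_order all_algebra all_field.
Set Implicit Arguments. Unset Strict Implicit. Unset Printing Implicit Defensive.
Import GRing.Theory.

(* Setting: F is the finite field F_q (q := #|F|), L : fieldExtType F is
   F_{q^n} with n := \dim {:L}; F_q-subspaces of F_{q^n} are {vspace L}. *)
Section FlagDefs.
Variables (F : finFieldType) (L : fieldExtType F).

Definition dS (U V : {vspace L}) : nat := (\dim (U + V)%VS - \dim (U :&: V)%VS)%N.

Definition df (A B : seq {vspace L}) : nat := (\sum_(p <- zip A B) dS p.1 p.2)%N.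

Definition is_flag_of_type (A : seq {vspace L}) (t : seq nat) : Prop :=
  [seq \dim U | U <- A] = t /\ sorted ltn t /\ all (fun d => 0 < d < \dim {:L})%N t /\
  (forall i, i.+1 < size A -> (nth 0%VS A i <= nth 0%VS A i.+1)%VS)%N.

Definition flag_bound (t : seq nat) : nat :=
  let n := \dim {:L} in
  (2 * \sum_(d <- t) (if d <= n./2 then d else n - d))%N.

Definition min_distance_is (C : seq {vspace L} -> Prop) (d : nat) : Prop :=
  (exists A B, C A /\ C B /\ A <> B /\ df A B = d) /\
  (forall A B, C A -> C B -> A <> B -> (d <= df A B)%N).

Definition optimum_distance_flag_code (C : seq {vspace L} -> Prop) (t : seq nat) : Prop :=
  (forall A, C A -> is_flag_of_type A t) /\ min_distance_is C (flag_bound t).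

(* the weaved flag: K i plays F_{q^{m_i}}, alpha primitive in L;
   alpha_{i+1} = alpha^((q^n-1)/(q^{m_{i+1}}-1));
   F^i_j = sum_{t<j} F_{q^{m_i}} alpha_{i+1}^t, for 1<=i<=k, 1<=j<=L_{i+1}-1 *)
Definition alpha_i (alpha : L) (m : nat -> nat) (i : nat) : L :=
  alpha ^+ ((#|F| ^ \dim {:L} - 1) %/ (#|F| ^ m i - 1)).

Definition weaved_flag (K : nat -> {vspace L}) (m : nat -> nat) (k : nat) (alpha : L)
  : seq {vspace L} :=
  flatten [seq [seq (\sum_(t < j) (K i * <[alpha_i alpha m i.+1 ^+ t]>))%VS
               | j <- iota 1 (m i.+1 %/ m i - 1)]
          | i <- iota 1 k].

Definition orbit_flag (beta : L) (A : seq {vspace L}) : seq {vspace L} -> Prop :=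
  fun C => exists j : nat, C = [seq (U * <[beta ^+ j]>)%VS | U <- A].

End FlagDefs.

(* Every subspace F^i_j of the weaved flag is an F_{q^m_1}-module, so the
   translates of the flag by beta^i and beta^j coincide when beta^(j-i) lies
   in F_{q^m_1}; otherwise, by hypothesis, w := beta^(j-i) is not even in
   F_{q^m_k}, and the distance is computed subspace by subspace.  Since
   alpha_(i+1) has degree L_(i+1) over F_{q^m_i}, F^i_j has dimension j m_i.
   All F^i_j other than F^k_2 lie in F_{q^m_k}, so their two translates meet
   trivially and contribute twice their dimension.  F^k_2 only occurs when
   n = 3 m_k, and then its two translates span the whole field, which gives
   the contribution 2 (n - 2 m_k). *)

From HB Require Import structures.
From mathcomp Require Import all_boot all_order all_algebra all_field.
From mathcomp Require Import zify.
Import GRing.Theory.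
Set Implicit Arguments. Unset Strict Implicit. Unset Printing Implicit Defensive.

Lemma dvdn_subn1_expn q a b : (a %| b)%N -> (q ^ a - 1 %| q ^ b - 1)%N.
Proof.
case/dvdnP=> c ->; rewrite mulnC expnM; case: (q ^ a)%N => [|x].
  by case: c => [|c]; rewrite ?expn0 ?exp0n.
rewrite subn1 /= -eqn_mod_dvd ?expn_gt0 // -modnXm.
by rewrite -[x.+1]addn1 modnDl modnXm exp1n.
Qed.

Lemma prim_root_neq0 (R : nzRingType) d (z : R) : (d.-primitive_root z)%R -> (z != 0)%R.
Proof.
move=> prim_z; apply/eqP=> z0; have := prim_expr_order prim_z.
by rewrite z0 expr0n gtn_eqF ?(prim_order_gt0 prim_z) // => /esym/eqP; rewrite oner_eq0.
Qed.

Section FiniteFields.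
Variables (F : finFieldType) (L : fieldExtType F).
Local Notation q := #|F|.

Lemma subfield_dvdn_dimS (K1 K2 : {subfield L}) :
  (\dim K1 %| \dim K2)%N -> (K1 <= K2)%VS.
Proof.
case/dvdnP=> c dimK2; apply/subvP=> x; rewrite !Fermat's_little_theorem dimK2.
move/eqP=> xK1; rewrite mulnC expnM; elim: c {dimK2} => [|c IHc]; first by rewrite expr1.
by rewrite expnSr exprM (eqP IHc) xK1.
Qed.

Lemma prim_root_mem_subfield (E : {subfield L}) d (z : L) :
  (d.-primitive_root z)%R -> (z \in E) = (d %| q ^ \dim E - 1)%N.
Proof.
move=> prim_z; have z_neq0 := prim_root_neq0 prim_z.
have qE_gt0 : (0 < q ^ \dim E)%N by rewrite expn_gt0 (ltnW (finNzRing_gt1 F)).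
rewrite Fermat's_little_theorem (prim_order_dvd prim_z) /=.
have {1}-> : (q ^ \dim E = (q ^ \dim E - 1).+1)%N by rewrite subn1 prednK.
by rewrite exprS -[X in _ == X]mulr1 (inj_eq (mulfI z_neq0)).
Qed.

Lemma dim_subfield_prim_root (E : {subfield L}) e (z : L) :
  ((q ^ e - 1).-primitive_root z)%R -> z \in E -> (e <= \dim E)%N.
Proof.
move=> prim_z; rewrite (prim_root_mem_subfield _ prim_z) => /dvdn_leq.
have q_gt1 := finNzRing_gt1 F; have qE_gt1 : (1 < q ^ \dim E)%N.
  by rewrite -{1}(expn0 q) ltn_exp2l // adim_gt0.
by rewrite subn_gt0 leq_sub2rE ?(ltnW qE_gt1) // leq_exp2l //; apply.
Qed.

End FiniteFields.

Section PowerSpan.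
Variables (F0 : fieldType) (L : fieldExtType F0).
Implicit Types (K E : {subfield L}) (U : {vspace L}) (x w : L).

(* [pow_span F_(q^m_i) alpha_(i+1) j] is the paper's [F^i_j]. *)
Definition pow_span K x j : {vspace L} := (\sum_(t < j) (K * <[x ^+ t]>))%VS.

Lemma pow_span1 K x : pow_span K x 1 = K.
Proof. by rewrite /pow_span big_ord1 expr0 prodv1. Qed.

Lemma pow_spanS K x j : pow_span K x j.+1 = (pow_span K x j + K * <[x ^+ j]>)%VS.
Proof. by rewrite /pow_span big_ord_recr. Qed.

Lemma mem1_pow_span K x j : (0 < j)%N -> (1 \in pow_span K x j)%R.
Proof.
move=> j_gt0; apply: (subvP (sumv_sup (Ordinal j_gt0) _ _)) => //=.
by rewrite expr0 prodv1 mem1v.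
Qed.

Lemma pow_span_module K x j : (K * pow_span K x j <= pow_span K x j)%VS.
Proof.
rewrite /pow_span big_distrr /=; apply/subv_sumP => t _.
by rewrite prodvA prodv_id (sumv_sup t).
Qed.

Lemma pow_span_sub K E x j : (K <= E)%VS -> x \in E -> (pow_span K x j <= E)%VS.
Proof.
move=> sKE xE; apply/subv_sumP => t _; apply: prodv_sub => //.
by rewrite -memvE rpredX.
Qed.

Lemma Fadjoin_pow_span K x : <<K; x>>%VS = pow_span K x (adjoin_degree K x).
Proof. exact: Fadjoin_eq_sum. Qed.

Lemma dim_pow_spanD K x j c : (x != 0)%R ->
  (\dim (pow_span K x (j + c)) <= \dim (pow_span K x j) + c * \dim K)%N.
Proof.
move=> x_neq0; elim: c => [|c IHc]; first by rewrite mul0n !addn0.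
rewrite addnS pow_spanS mulSn addnCA; apply: (leq_trans (dimv_add_leqif _ _).1).
by rewrite dim_cosetv ?expf_neq0 // addnC leq_add2l.
Qed.

(* Upper bound by subadditivity; it is attained at [j = adjoin_degree K x],
   where [pow_span K x j = <<K; x>>], so it is attained below as well. *)
Lemma dim_pow_span K x j : (x != 0)%R -> (j <= adjoin_degree K x)%N ->
  \dim (pow_span K x j) = (j * \dim K)%N.
Proof.
move=> x_neq0 le_j_deg; apply/eqP; rewrite eqn_leq; apply/andP; split.
  by have := dim_pow_spanD K 0 j x_neq0; rewrite add0n /pow_span big_ord0 dimv0.
have := dim_pow_spanD K j (adjoin_degree K x - j) x_neq0.
rewrite subnKC // -Fadjoin_pow_span dim_Fadjoin -{1}(subnKC le_j_deg) mulnDl.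
by rewrite leq_add2r.
Qed.

Lemma Fadjoin_sub_module K U w :
  (K * U <= U)%VS -> (1 \in U)%R -> (U * <[w]> <= U)%VS -> (<<K; w>> <= U)%VS.
Proof.
move=> modU U1 Uw_sub; rewrite Fadjoin_pow_span; apply/subv_sumP => t _.
have sKU : (K <= U)%VS by apply: subv_trans modU; rewrite -{1}(prodv1 K) prodvSr // -memvE.
apply: subv_trans (prodvSl _ sKU) _; elim: (t : nat) => [|i IHi]; first by rewrite prodv1.
by rewrite exprSr -prodv_line prodvA; apply: subv_trans (prodvSl _ IHi) Uw_sub.
Qed.

End PowerSpan.

Section Cosets.
Variables (F0 : fieldType) (L : fieldExtType F0).
Implicit Types (K W : {subfield L}) (U : {vspace L}) (x y w : L).

Lemma capv_cosetv_eq0 W U x y : (x != 0)%R -> (y != 0)%R ->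
  (U <= W)%VS -> (y / x)%R \notin W -> (U * <[x]> :&: U * <[y]>)%VS = 0%VS.
Proof.
move=> x_neq0 y_neq0 sUW; apply: contraNeq; rewrite -subv0 => /subvPn[z].
rewrite memv_cap memv0 => /andP[/memv_cosetP[u1 u1U ->] /memv_cosetP[u2 u2U]].
have [->|u1_neq0] := eqVneq u1 0%R; first by rewrite mul0r eqxx.
move=> eq_u12 _; have u2_neq0 : (u2 != 0)%R.
  by apply: contraNneq (mulf_neq0 u1_neq0 x_neq0); rewrite eq_u12 => ->; rewrite mul0r.
have -> : (y / x = u1 / u2)%R by apply/eqP; rewrite eqr_div // eq_u12 mulrC.
by rewrite rpred_div ?(subvP sUW).
Qed.

Lemma cosetv_module_id K U w :
  (K * U <= U)%VS -> w \in K -> (w != 0)%R -> (U * <[w]>)%VS = U.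
Proof.
move=> modU wK w_neq0; apply/eqP; rewrite eqEdim dim_cosetv // leqnn andbT.
by apply: subv_trans modU; rewrite prodvC prodvSl // -memvE.
Qed.

Lemma cosetv_eq_stable U x y : (x != 0)%R ->
  (U * <[x]>)%VS = (U * <[y]>)%VS -> (U * <[y / x]>)%VS = U.
Proof.
move=> x_neq0 eq_xy.
by rewrite -prodv_line prodvA -eq_xy -prodvA prodv_line divff // prodv1.
Qed.

(* The sum is a [K]-module of [K]-dimension 2 or 3; dimension 2 would make
   both cosets equal, and then [U] would contain the cubic extension
   [<<K; y / x>>] of [K], which has [K]-dimension 3. *)
Lemma addv_cosetv_full K U x y :
  (K * U <= U)%VS -> (1 \in U)%R -> \dim U = (2 * \dim K)%N ->
  \dim {:L} = (3 * \dim K)%N -> (x != 0)%R -> (y != 0)%R -> (y / x)%R \notin K ->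
  (U * <[x]> + U * <[y]>)%VS = fullv.
Proof.
move=> modU U1 dimU dimL x_neq0 y_neq0 yx_notK; set V := (_ + _)%VS.
have dimK_gt0 : (0 < \dim K)%N by exact: adim_gt0.
have modV : (K * V <= V)%VS.
  by rewrite prodvDr addvS // prodvA prodvSl.
have /dvdnP[c dimV] := field_module_dimS modV.
have le_Ux_V : (\dim (U * <[x]>) <= \dim V)%N by rewrite dimvS ?addvSl.
have le_Uy_V : (\dim (U * <[y]>) <= \dim V)%N by rewrite dimvS ?addvSr.
have le_V_L : (\dim V <= \dim {:L})%N by rewrite dimvS ?subvf.
rewrite !dim_cosetv // dimU dimV leq_pmul2r // in le_Ux_V le_Uy_V.
rewrite dimL dimV leq_pmul2r // in le_V_L.
have [c3|c2] := eqVneq c 3.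
  by apply/eqP; rewrite eqEdim subvf dimL dimV c3 leqnn.
have eq_UxV : (U * <[x]>)%VS = V.
  by apply/eqP; rewrite eqEdim addvSl dim_cosetv // dimU dimV leq_pmul2r //; lia.
have eq_UyV : (U * <[y]>)%VS = V.
  by apply/eqP; rewrite eqEdim addvSr dim_cosetv // dimU dimV leq_pmul2r //; lia.
have sKyxU : (<<K; y / x>> <= U)%VS.
  rewrite Fadjoin_sub_module // cosetv_eq_stable // eq_UxV eq_UyV //.
have deg_dvd3 : (adjoin_degree K (y / x) %| 3)%N.
  by rewrite -(dvdn_pmul2r dimK_gt0) -dim_Fadjoin -dimL field_dimS ?subvf.
have := dimvS sKyxU; rewrite dim_Fadjoin dimU leq_pmul2r //.
have := adjoin_deg_eq1 K (y / x)%R; rewrite (negPf yx_notK).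
by case: (adjoin_degree K _) deg_dvd3 => [|[|[|]]].
Qed.

Lemma expr_div_mem_subfield (E1 E2 : {subfield L}) (b : L) :
  (b != 0)%R -> (forall j, ((b ^+ j)%R \in E1) = ((b ^+ j)%R \in E2)) ->
  forall i j, ((b ^+ j / b ^+ i)%R \in E1) = ((b ^+ j / b ^+ i)%R \in E2).
Proof.
move=> b_neq0 memE12 i j; have b_unit : b \is a GRing.unit by rewrite unitfE.
have [le_ij|/ltnW le_ji] := leqP i j; first by rewrite -exprB.
by rewrite -(memvV E1) -(memvV E2) invf_div -exprB.
Qed.

End Cosets.

Lemma sorted_iota (r : rel nat) a c :
  (forall i, (a <= i)%N -> (i.+1 < a + c)%N -> r i i.+1) -> sorted r (iota a c).
Proof.
elim: c a => [|[|c] IHc] a r_succ //=.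
rewrite r_succ ?addnS ?ltnS ?leq_addr //=; apply: IHc => i a_lt_i lt_i_ac.
by apply: r_succ; [exact: ltnW | rewrite -addSnnS].
Qed.

Lemma sorted_flatten (T : Type) (r : rel T) (x0 : T) (ss : seq (seq T)) :
  all (fun s => ~~ nilp s && sorted r s) ss ->
  sorted (fun s t => r (last x0 s) (head x0 t)) ss -> sorted r (flatten ss).
Proof.
elim: ss => [|[|y s] ss IHss] //= /andP[path_ys ss_ok] /[dup] chain.
move=> /path_sorted/(IHss ss_ok); rewrite cat_path path_ys /=.
case: ss chain ss_ok {IHss} => [|[|z t] ss] //= /andP[r_last _] _.
by rewrite r_last.
Qed.

Lemma last_map_iota (T : Type) (f : nat -> T) x0 a c : (0 < c)%N ->
  last x0 [seq f j | j <- iota a c] = f (a + c).-1.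
Proof.
case: c => // c _; rewrite -nth_last size_map size_iota (nth_map 0) ?size_iota //.
by rewrite nth_iota // addnS.
Qed.

Section SubspaceDistance.
Variables (F : finFieldType) (L : fieldExtType F).
Implicit Types (U : {vspace L}) (x y : L).

Lemma dS_cosetv_cap0 U x y : (x != 0)%R -> (y != 0)%R ->
  (U * <[x]> :&: U * <[y]>)%VS = 0%VS -> dS (U * <[x]>) (U * <[y]>) = (2 * \dim U)%N.
Proof.
move=> x_neq0 y_neq0 cap0; have := dimv_sum_cap (U * <[x]>) (U * <[y]>).
by rewrite /dS cap0 dimv0 addn0 subn0 !dim_cosetv // => ->; rewrite mul2n addnn.
Qed.

Lemma dS_cosetv_full U x y : (x != 0)%R -> (y != 0)%R ->
  (U * <[x]> + U * <[y]>)%VS = fullv ->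
  dS (U * <[x]>) (U * <[y]>) = (2 * (\dim {:L} - \dim U))%N.
Proof.
move=> x_neq0 y_neq0 sum_full; have := @dimv_sum_cap _ L (U * <[x]>) (U * <[y]>).
rewrite /dS; have -> : \dim (U * <[x]> + U * <[y]>) = \dim {:L} by rewrite sum_full.
(* [set] merges the two elaborations of [\dim U], which [lia] would keep apart. *)
rewrite !dim_cosetv //; set u := \dim U; lia.
Qed.

Lemma df_refl (A : seq {vspace L}) : df A A = 0%N.
Proof.
rewrite /df; elim: A => [|U A IHA]; first by rewrite big_nil.
by rewrite /= big_cons IHA /dS addvv capvv subnn.
Qed.

End SubspaceDistance.

Section WeavedFlag.
Variables (F : finFieldType) (L : fieldExtType F) (k : nat) (m : nat -> nat)
  (K : nat -> {subfield L}) (alpha : L).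
Local Notation q := #|F|.
Local Notation n := (\dim {:L}).
Hypothesis k_gt0 : (0 < k)%N.
Hypothesis m_chain : forall i, (1 <= i <= k)%N -> (m i < m i.+1)%N /\ (m i %| m i.+1)%N.
Hypothesis m_top : m k.+1 = n.
Hypothesis dimK : forall i, (1 <= i <= k)%N -> \dim (K i) = m i.
Hypothesis alpha_prim : ((q ^ n - 1)%N.-primitive_root alpha)%R.

Local Notation ext_deg i := (m i.+1 %/ m i).
Local Notation a i := (alpha_i alpha m i).
Local Notation V i j := (pow_span (K i) (a i.+1) j).
Let Fl := weaved_flag (fun i => (K i : {vspace L})) m k alpha.

Lemma m_gt0 i : (1 <= i <= k.+1)%N -> (0 < m i)%N.
Proof.
case/andP=> i_gt0; rewrite leq_eqVlt ltnS => /predU1P[->|le_ik].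
  by rewrite m_top (adim_gt0 {:L}%AS).
by rewrite -dimK ?adim_gt0 ?i_gt0.
Qed.

Lemma m_dvd i j : (1 <= i <= j)%N -> (j <= k.+1)%N -> (m i %| m j)%N.
Proof.
case/andP=> i_gt0; elim: j => [|j IHj]; first by rewrite leqn0 => /eqP->.
rewrite leq_eqVlt => /predU1P[-> //|le_ij le_jk].
apply: dvdn_trans (IHj le_ij (ltnW le_jk)) _.
by case: (m_chain (i := j)) => //; rewrite (leq_trans i_gt0).
Qed.

Lemma m_leq i j : (1 <= i <= j)%N -> (j <= k.+1)%N -> (m i <= m j)%N.
Proof.
move=> le_ij le_jk; apply: dvdn_leq (m_dvd le_ij le_jk).
by apply: m_gt0; lia.
Qed.

Lemma ext_degK i : (1 <= i <= k)%N -> (ext_deg i * m i = m i.+1)%N.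
Proof. by case/m_chain=> _ /divnK. Qed.

Lemma ext_deg_gt1 i : (1 <= i <= k)%N -> (1 < ext_deg i)%N.
Proof. by case/m_chain=> lt_m dvd_m; rewrite ltn_divRL // mul1n. Qed.

Lemma K_sub i j : (1 <= i <= j)%N -> (j <= k)%N -> (K i <= K j)%VS.
Proof.
move=> le_ij le_jk; apply: subfield_dvdn_dimS; rewrite !dimK ?m_dvd //; lia.
Qed.

Lemma alpha_i_prim i : (1 <= i <= k.+1)%N -> ((q ^ m i - 1).-primitive_root (a i))%R.
Proof.
move=> le_ik; apply: (dvdn_prim_root alpha_prim).
by rewrite dvdn_subn1_expn // -m_top m_dvd //; case/andP: le_ik => ->.
Qed.

Lemma alpha_i_mem i : (1 <= i <= k)%N -> a i \in K i.
Proof.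
move=> le_ik; rewrite (prim_root_mem_subfield _ (alpha_i_prim _)) ?dimK //.
by case/andP: le_ik => -> /leqW.
Qed.

Lemma ext_deg_le_adjoin_degree i : (1 <= i <= k)%N ->
  (ext_deg i <= adjoin_degree (K i) (a i.+1))%N.
Proof.
move=> le_ik; have prim_a : ((q ^ m i.+1 - 1).-primitive_root (a i.+1))%R.
  by apply: alpha_i_prim; lia.
have := dim_subfield_prim_root prim_a (memv_adjoin (K i) (a i.+1)).
have m_i_gt0 : (0 < m i)%N by apply: m_gt0; lia.
by rewrite dim_Fadjoin dimK // -{1}(ext_degK le_ik) leq_pmul2r.
Qed.

Lemma dim_V i j : (1 <= i <= k)%N -> (j <= ext_deg i)%N -> \dim (V i j) = (j * m i)%N.
Proof.
move=> le_ik le_j; rewrite dim_pow_span ?dimK //.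
  by rewrite (prim_root_neq0 (alpha_i_prim _)) //; lia.
exact: leq_trans le_j (ext_deg_le_adjoin_degree le_ik).
Qed.

Lemma V_sub i j : (1 <= i)%N -> (i < k)%N -> (V i j <= K i.+1)%VS.
Proof.
move=> i_gt0 lt_ik; apply: pow_span_sub; first by apply: K_sub; lia.
by apply: alpha_i_mem; rewrite lt_ik.
Qed.

Lemma Fl_blocks :
  Fl = flatten [seq [seq V i j | j <- iota 1 (ext_deg i - 1)] | i <- iota 1 k].
Proof. by []. Qed.

Lemma Fl_mem U : U \in Fl ->
  exists i j, [/\ (1 <= i <= k)%N, (0 < j < ext_deg i)%N & U = V i j].
Proof.
rewrite Fl_blocks => /flatten_mapP[i]; rewrite mem_iota => le_ik.
case/mapP=> j; rewrite mem_iota => le_j ->.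
by exists i, j; split=> //; lia.
Qed.

Lemma Fl_chain : sorted [rel U W | (U <= W)%VS && (\dim U < \dim W)%N] Fl.
Proof.
rewrite Fl_blocks; apply: (sorted_flatten (x0 := 0%VS)).
  apply/allP=> s /mapP[i]; rewrite mem_iota => le_ik ->.
  have lt1_ext := ext_deg_gt1 (i := i); rewrite /nilp size_map size_iota.
  rewrite sorted_map -lt0n subn_gt0 lt1_ext ?add1n //=.
  apply: sorted_iota => j j_gt0 lt_j_ext /=.
  by rewrite {1}pow_spanS addvSl !dim_V ?ltn_pmul2r ?m_gt0 //; lia.
rewrite sorted_map; apply: sorted_iota => i i_gt0; rewrite add1n ltnS => lt_ik /=.
have [ext_i_gt1 ext_i1_gt1] : (1 < ext_deg i)%N /\ (1 < ext_deg i.+1)%N.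
  by split; apply: ext_deg_gt1; lia.
rewrite last_map_iota ?subn_gt0 // (_ : (1 + _).-1 = ext_deg i - 1)%N; last lia.
rewrite -(prednK (_ : 0 < ext_deg i.+1 - 1)%N) ?subn_gt0 //= pow_span1.
by rewrite V_sub // dimK ?dim_V ?leq_subr //; lia.
Qed.

Lemma flag_of_type_cosetv x : (x != 0)%R ->
  is_flag_of_type [seq (U * <[x]>)%VS | U <- Fl] [seq \dim U | U <- Fl].
Proof.
move=> x_neq0; split; [|split; [|split]].
- by rewrite -map_comp; apply: eq_map => U /=; rewrite dim_cosetv.
- by rewrite sorted_map; apply: sub_sorted Fl_chain => U W /andP[].
- apply/allP=> _ /mapP[_ /Fl_mem[i [j [le_ik /andP[j_gt0 lt_j_ext] ->]]] ->].
  have m_i_gt0 : (0 < m i)%N by apply: m_gt0; lia.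
  have le_m_n : (m i.+1 <= n)%N by rewrite -m_top m_leq //; lia.
  rewrite dim_V ?(ltnW lt_j_ext) // muln_gt0 j_gt0 m_i_gt0 /=.
  by apply: leq_trans le_m_n; rewrite -(ext_degK le_ik) ltn_pmul2r.
- move=> i; rewrite size_map => lt_i_Fl; rewrite !(nth_map 0%VS) //; last exact: ltnW.
  by apply: prodvSl; have /(sortedP 0%VS)/(_ i lt_i_Fl)/andP[] := Fl_chain.
Qed.

Lemma Fl_K1_module U : U \in Fl -> (K 1 * U <= U)%VS.
Proof.
case/Fl_mem=> i [j [le_ik _ ->]].
by apply: subv_trans (pow_span_module _ _ _); apply: prodvSl; apply: K_sub; lia.
Qed.

Lemma Fl_cosetv_mulK1 w x : w \in K 1 -> (w != 0)%R ->
  [seq (U * <[w * x]>)%VS | U <- Fl] = [seq (U * <[x]>)%VS | U <- Fl].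
Proof.
move=> wK1 w_neq0; apply/eq_in_map=> U U_Fl.
by rewrite -prodv_line prodvA (cosetv_module_id (Fl_K1_module U_Fl)).
Qed.

Lemma m_le_half i : (1 <= i <= k)%N -> (m i <= n./2)%N.
Proof.
move=> le_ik; have le_kk : (0 < k <= k)%N by rewrite k_gt0 leqnn.
have two_mk : (2 * m k <= n)%N.
  by rewrite -m_top -(ext_degK le_kk) leq_mul2r ext_deg_gt1 ?orbT.
have := m_leq (i := i) (j := k); lia.
Qed.

Lemma K1_in_Fl : (K 1 : {vspace L}) \in Fl.
Proof.
rewrite -(pow_span1 _ (a 2)) Fl_blocks; apply/flatten_mapP; exists 1%N.
  by rewrite mem_iota; lia.
by apply: map_f; rewrite mem_iota; have := ext_deg_gt1 (i := 1); lia.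
Qed.

Lemma flag_bound_gt0 : (0 < flag_bound L [seq \dim U | U <- Fl])%N.
Proof.
have m1_gt0 : (0 < m 1)%N by apply: m_gt0; lia.
by rewrite /flag_bound big_map (big_rem _ K1_in_Fl) /= dimK ?m_le_half //; lia.
Qed.

Hypothesis ext_top : (n %/ m k <= 3)%N.

Lemma Fl_sub_or_top U : U \in Fl -> (U <= K k)%VS \/ (n = 3 * m k /\ U = V k 2)%N.
Proof.
case/Fl_mem=> i [j [le_ik /andP[j_gt0 lt_j_ext] ->]].
have [lt_ik|ge_ik] := ltnP i k.
  by left; apply: subv_trans (V_sub _ _ _) (K_sub _ _); lia.
have ik : i = k by lia.
subst i; have [->|j_gt1] := eqVneq j 1%N; first by left; rewrite pow_span1.
have ext3 : ext_deg k = 3%N by move: lt_j_ext ext_top; rewrite m_top; lia.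
right; split; last by congr pow_span; lia.
by rewrite -m_top -(ext_degK (i := k)) ?ext3 //; lia.
Qed.

Lemma dS_cosetv_Fl U x y : (x != 0)%R -> (y != 0)%R -> (y / x)%R \notin K k -> U \in Fl ->
  dS (U * <[x]>) (U * <[y]>) = (2 * (if \dim U <= n./2 then \dim U else n - \dim U))%N.
Proof.
move=> x_neq0 y_neq0 yx_notK /Fl_sub_or_top[sUK|[n3 ->]].
  rewrite dS_cosetv_cap0 ?(capv_cosetv_eq0 _ _ sUK) //.
  by rewrite (leq_trans (dimvS sUK)) // dimK ?m_le_half //; lia.
have m_k_gt0 : (0 < m k)%N by apply: m_gt0; lia.
have ext3 : ext_deg k = 3%N by rewrite m_top n3 mulnK.
have dimV2 : \dim (V k 2) = (2 * m k)%N by rewrite dim_V ?ext3 //; lia.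
rewrite dS_cosetv_full ?(addv_cosetv_full (pow_span_module _ _ _));
  rewrite ?mem1_pow_span ?dimK //; try lia.
by rewrite dimV2 n3 ifN //; lia.
Qed.

Lemma df_cosetv_Fl x y : (x != 0)%R -> (y != 0)%R -> (y / x)%R \notin K k ->
  df [seq (U * <[x]>)%VS | U <- Fl] [seq (U * <[y]>)%VS | U <- Fl] =
  flag_bound L [seq \dim U | U <- Fl].
Proof.
move=> x_neq0 y_neq0 yx_notK; rewrite /df zip_map big_map /flag_bound big_map big_distrr.
by apply: eq_big_seq => U; apply: dS_cosetv_Fl.
Qed.

End WeavedFlag.

Unset Implicit Arguments.

Theorem mainTheorem13 (F : finFieldType) (L : fieldExtType F)
  (k : nat) (m : nat -> nat) (K : nat -> {subfield L}) (alpha beta : L) :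
  (1 <= k)%N ->
  (0 < m 1)%N ->
  (forall i, (1 <= i <= k)%N -> (m i < m i.+1)%N /\ (m i %| m i.+1)%N) ->
  m k.+1 = \dim {:L} ->
  (forall i, (1 <= i <= k)%N -> \dim (K i) = m i) ->
  ((#|F| ^ \dim {:L} - 1)%N.-primitive_root alpha)%R ->
  (beta != 0)%R ->
  beta \notin (K 1 : {vspace L}) ->
  (forall x : L, (exists j : nat, x = (beta ^+ j)%R) ->
      (x \in (K 1 : {vspace L})) = (x \in (K k : {vspace L}))) ->
  (\dim {:L} %/ m k <= 3)%N ->
  let Fl := weaved_flag (fun i => (K i : {vspace L})) m k alpha in
  optimum_distance_flag_code (orbit_flag beta Fl) [seq \dim U | U <- Fl].
Proof.
(* [0 < m 1] is implied by [\dim (K 1) = m 1]. *)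
move=> k_gt0 _ m_chain m_top dimK alpha_prim beta_neq0 beta_notK1 beta_K1_Kk ext_top Fl.
have beta_exp_neq0 j : (beta ^+ j != 0)%R by rewrite expf_neq0.
have df_orbit i j : (beta ^+ j / beta ^+ i)%R \notin K 1 ->
    df [seq (U * <[beta ^+ i]>)%VS | U <- Fl] [seq (U * <[beta ^+ j]>)%VS | U <- Fl] =
    flag_bound L [seq \dim U | U <- Fl].
  rewrite (expr_div_mem_subfield _ (fun t => beta_K1_Kk _ (ex_intro _ t erefl))) //.
  exact: df_cosetv_Fl.
have bound_gt0 : (0 < flag_bound L [seq \dim U | U <- Fl])%N by exact: flag_bound_gt0.
split=> [_ [j ->]|]; first exact: flag_of_type_cosetv.
split=> [|_ _ [i ->] [j ->] neq_ij].
  have := df_orbit 0%N 1%N; rewrite expr0 divr1 expr1 => /(_ beta_notK1) df01.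
  exists [seq (U * <[beta ^+ 0]>)%VS | U <- Fl], [seq (U * <[beta ^+ 1]>)%VS | U <- Fl].
  split; first by exists 0%N.
  split; first by exists 1%N.
  by split=> // eq01; move: bound_gt0; rewrite -df01 eq01 df_refl.
rewrite df_orbit //; apply/negP=> ji_K1; apply: neq_ij.
by rewrite -(divfK (beta_exp_neq0 i) (beta ^+ j)%R) Fl_cosetv_mulK1 // mulf_neq0 ?invr_eq0.
Qed.
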